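(* Let $u:V\to[0,1]$ and suppose $q^*\in\arg\max_{\|q\|_\infty\le1}\sum_{x\in V}u(x)(\mathrm{div}_wq)(x)$. For $\alpha\in(0,1]$ define $u^\alpha(x)=1$ if $u(x)\ge\alpha$ and $u^\alpha(x)=0$ otherwise. Then for almost every threshold level $\alpha\in(0,1]$, $q^*$ also satisfies $q^*\in\arg\max_{\|q\|_\infty\le1}\sum_{x\in V}u^\alpha(x)(\mathrm{div}_wq)(x)$.
   Context: Let $G=(V,E)$ be a finite undirected graph with symmetric weights $w(x,y)=w(y,x)>0$ for $\{x,y\}\in E$ and $w(x,y)=0$ otherwise. For $q:V\times V\to\mathbb{R}$, $(\mathrm{div}_wq)(x)=\frac12\sum_{y\in V}w(x,y)(q(x,y)-q(y,x))$ and $\|q\|_\infty=\max_{x,y\in V}|q(x,y)|$; the maximization is over all $q:V\times V\to\mathbb{R}$ with $\|q\|_\infty\le1$. *)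

From HB Require Import structures.
From mathcomp Require Import all_boot all_order all_algebra.
From mathcomp Require Import all_classical all_reals all_analysis.
Set Implicit Arguments. Unset Strict Implicit. Unset Printing Implicit Defensive.
Import Order.TTheory GRing.Theory Num.Theory.
Local Open Scope ring_scope.

Section Defs.
Variables (R : realType) (V : finType).

Definition divw (w : V -> V -> R) (q : V -> V -> R) (x : V) : R :=
  2^-1 * \sum_(y : V) w x y * (q x y - q y x).

Definition linf (q : V -> V -> R) : R :=
  \big[Num.max/0]_(p : V * V) `|q p.1 p.2|.

Definition objective (w : V -> V -> R) (u : V -> R) (q : V -> V -> R) : R :=
  \sum_(x : V) u x * divw w q x.

Definition is_argmax (w : V -> V -> R) (u : V -> R) (qs : V -> V -> R) : Prop :=
  linf qs <= 1 /\
  forall q : V -> V -> R, linf q <= 1 -> objective w u q <= objective w u qs.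

Definition thresh (u : V -> R) (alpha : R) (x : V) : R :=
  if alpha <= u x then 1 else 0.

End Defs.

From HB Require Import structures.
From mathcomp Require Import all_boot all_order all_algebra.
From mathcomp Require Import all_classical all_reals all_analysis.
From mathcomp Require Import ring.
Import Order.TTheory GRing.Theory Num.Theory.
Local Open Scope classical_set_scope.
Local Open Scope ring_scope.

(* The maximum of the objective is the weighted total variation of u, and a
   maximiser q* is calibrated: on every edge, q* x y (u x - u y) = |u x - u y|,
   so q* x y is the sign of u x - u y wherever these differ.  A nondecreasing
   function of u (such as the indicator u^alpha, for any alpha) only changes
   where u does, and in the same direction, so q* stays calibrated for it and
   is again a maximiser.  The exceptional set of levels is in fact empty. *)

Section TotalVariation.
Variables (R : realType) (V : finType) (w : V -> V -> R).
Hypotheses (w_sym : forall x y, w x y = w y x) (w_ge0 : forall x y, 0 <= w x y).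

Lemma normr_le_linf (q : V -> V -> R) a b : `|q a b| <= linf q.
Proof.
rewrite /linf; have : (a, b) \in index_enum (prod V V) by rewrite mem_index_enum.
elim: (index_enum _) => [//|p s IHs]; rewrite in_cons big_cons le_max.
by case/orP => [/eqP <-|/IHs ->]; rewrite ?lexx ?orbT.
Qed.

Lemma linf_le1 (q : V -> V -> R) : (forall a b, `|q a b| <= 1) -> linf q <= 1.
Proof.
move=> q_le1; apply: (big_ind (fun r => r <= 1)) => // r s r_le1 s_le1.
by rewrite ge_max r_le1 s_le1.
Qed.

Definition total_variation (v : V -> R) : R :=
  2^-1 * \sum_x \sum_y w x y * `|v x - v y|.

Lemma objective_edgeE (v : V -> R) q :
  objective w v q = 2^-1 * \sum_x \sum_y w x y * q x y * (v x - v y).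
Proof.
rewrite /objective /divw; under eq_bigr => x _ do rewrite mulrCA.
rewrite -mulr_sumr; congr (_ * _).
transitivity (\sum_x \sum_y v x * (w x y * q x y)
              - \sum_x \sum_y v x * (w x y * q y x)).
  rewrite -sumrB; apply: eq_bigr => x _; rewrite mulr_sumr -sumrB.
  by apply: eq_bigr => y _; rewrite !mulrBr.
rewrite [X in _ - X]exchange_big /= -sumrB; apply: eq_bigr => x _.
by rewrite -sumrB; apply: eq_bigr => y _; rewrite w_sym; ring.
Qed.

Definition calibration_gap (v : V -> R) (q : V -> V -> R) x y : R :=
  w x y * (`|v x - v y| - q x y * (v x - v y)).

Lemma calibration_gap_ge0 (v : V -> R) q x y :
  linf q <= 1 -> 0 <= calibration_gap v q x y.
Proof.
move=> q_le1; rewrite mulr_ge0 // subr_ge0 (le_trans (ler_norm _)) //.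
rewrite normrM ler_piMl // (le_trans (normr_le_linf q x y)) //.
Qed.

Lemma total_variationE (v : V -> R) q :
  total_variation v =
  objective w v q + 2^-1 * \sum_x \sum_y calibration_gap v q x y.
Proof.
rewrite objective_edgeE -mulrDr; congr (_ * _); rewrite -big_split /=.
apply: eq_bigr => x _; rewrite -big_split /=; apply: eq_bigr => y _.
by rewrite /calibration_gap; ring.
Qed.

Lemma objective_le_total_variation (v : V -> R) q :
  linf q <= 1 -> objective w v q <= total_variation v.
Proof.
move=> q_le1; rewrite (total_variationE v q) lerDl mulr_ge0 //.
by do 2!apply: sumr_ge0 => ? _; apply: calibration_gap_ge0.
Qed.

Lemma objective_sg (v : V -> R) :
  objective w v (fun x y => Num.sg (v x - v y)) = total_variation v.
Proof.
rewrite objective_edgeE; congr (_ * _); apply: eq_bigr => x _.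
by apply: eq_bigr => y _; rewrite -mulrA -normrEsg.
Qed.

Lemma linf_sg (v : V -> R) : linf (fun x y => Num.sg (v x - v y)) <= 1.
Proof. by apply: linf_le1 => a b; rewrite normr_sg; case: (_ != 0). Qed.

Lemma is_argmaxP (v : V -> R) q :
  is_argmax w v q <-> linf q <= 1 /\ forall x y, calibration_gap v q x y = 0.
Proof.
split=> [[q_le1 q_max]|[q_le1 gap0]].
  have gap_ge0 x y : 0 <= calibration_gap v q x y by exact: calibration_gap_ge0.
  have gap_sum0 : \sum_x \sum_y calibration_gap v q x y = 0.
    apply/eqP; rewrite eq_le; apply/andP; split; last first.
      by do 2!apply: sumr_ge0 => ? _.
    have := q_max _ (linf_sg v); rewrite objective_sg (total_variationE v q).
    by rewrite gerDl pmulr_rle0 ?invr_gt0 ?ltr0n.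
  split=> // x y; have /psumr_eq0P gap_row0 := gap_sum0.
  have /psumr_eq0P -> // := gap_row0 (fun x _ => sumr_ge0 _ (fun y _ => gap_ge0 x y)) x isT.
split=> // p p_le1; rewrite (le_trans (objective_le_total_variation v p p_le1)) //.
rewrite (total_variationE v q) big1 ?mulr0 ?addr0 // => x _.
by rewrite big1.
Qed.

Lemma calibration_gap_comp (u : V -> R) (f : R -> R) q x y :
  {homo f : a b / a <= b} -> calibration_gap u q x y = 0 ->
  calibration_gap (f \o u) q x y = 0.
Proof.
rewrite /calibration_gap /= => f_homo /eqP; rewrite mulf_eq0.
case/orP => [/eqP -> | ]; first by rewrite mul0r.
rewrite subr_eq0 => /eqP calib.
suff -> : q x y * (f (u x) - f (u y)) = `|f (u x) - f (u y)| by rewrite subrr mulr0.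
case: (ltgtP (u x) (u y)) calib => [uxy|uxy|->]; last by rewrite !subrr mulr0.
- rewrite ltr0_norm ?subr_lt0 // -[X in X = _]mulN1r => /mulIf.
  rewrite subr_eq0 lt_eqF // => /(_ isT) <-.
  by rewrite mulN1r ler0_norm // subr_le0 f_homo ?ltW.
- rewrite gtr0_norm ?subr_gt0 // -[X in X = _]mul1r => /mulIf.
  rewrite subr_eq0 gt_eqF // => /(_ isT) <-.
  by rewrite mul1r ger0_norm // subr_ge0 f_homo ?ltW.
Qed.

Lemma is_argmax_comp (u : V -> R) (f : R -> R) q :
  {homo f : a b / a <= b} -> is_argmax w u q -> is_argmax w (f \o u) q.
Proof.
move=> f_homo /is_argmaxP[q_le1 gap0]; apply/is_argmaxP; split=> // x y.
exact: calibration_gap_comp.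
Qed.

End TotalVariation.

Lemma thresh_comp (R : realType) (V : finType) (u : V -> R) alpha :
  thresh u alpha = (fun t => if alpha <= t then 1 else 0) \o u.
Proof. by []. Qed.

Lemma step_nondecreasing (R : realType) (alpha : R) :
  {homo (fun t : R => if alpha <= t then 1 else 0 : R) : a b / a <= b}.
Proof.
move=> a b ab; case: ifP => [alpha_a|_]; last by case: ifP.
by rewrite (le_trans alpha_a ab).
Qed.

Theorem lemma1 (R : realType) (V : finType) (w : V -> V -> R)
  (w_sym : forall x y, w x y = w y x) (w_ge0 : forall x y, 0 <= w x y)
  (u : V -> R) (u01 : forall x, 0 <= u x <= 1)
  (qs : V -> V -> R) (hqs : is_argmax w u qs) :
  (@lebesgue_measure R).-negligible
    [set alpha : R | 0 < alpha <= 1 /\ ~ is_argmax w (thresh u alpha) qs].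
Proof.
suff -> : [set alpha : R | 0 < alpha <= 1 /\ ~ is_argmax w (thresh u alpha) qs]
          = set0 by exact: negligible_set0.
apply/seteqP; split=> alpha //= [_]; apply.
rewrite thresh_comp; apply: is_argmax_comp => //.
exact: step_nondecreasing.
Qed.
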